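(* Let $\mathbf{a}=(a_0,a_1,\dots,a_n)$ be positive integers with $\sum_k \frac{1}{a_k}\ge 1$. Then the function $f_{\mathbf{a}}:\mathbb{R}_+\to\mathbb{Z}$, $$f_{\mathbf{a}}(x)=\sum_{k=0}^n\left(\left\lfloor \frac{x}{a_k}\right\rfloor+\left\lceil\frac{x}{a_k}\right\rceil\right)-\left(\lfloor x\rfloor+\lceil x\rceil\right),$$ attains a minimum, denoted $m(\mathbf{a})$. In particular, if $\mathbf{a}=(2,2,2,a_1,\dots,a_n)$ with $a_k$ positive integers and $n\ge 2$, then $m(\mathbf{a})\ge 2$. *)

From mathcomp Require Import all_boot all_order all_algebra.
From mathcomp Require Import reals.
Set Implicit Arguments. Unset Strict Implicit. Unset Printing Implicit Defensive.
Import Order.TTheory GRing.Theory Num.Theory.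
Local Open Scope ring_scope.

Definition f_a (R : realType) (a : seq nat) (x : R) : int :=
  \sum_(k <- a) (Num.floor (x / k%:R) + Num.ceil (x / k%:R))
  - (Num.floor x + Num.ceil x).

From mathcomp Require Import all_boot all_order all_algebra.
From mathcomp Require Import reals.
From mathcomp Require Import zify lra.
From Stdlib Require Import Classical.
Set Implicit Arguments.
Unset Strict Implicit.
Unset Printing Implicit Defensive.

Import Order.TTheory GRing.Theory Num.Theory.
Local Open Scope ring_scope.

(* Since 2y - 1 <= floor y + ceil y <= 2y + 1, the condition sum_k 1/a_k >= 1
   makes f_a bounded below by -(n + 2); an integer-valued function bounded
   below attains its minimum.  For a = (2,2,2,a_1,...,a_n) put y = x/2: then
   floor x + ceil x <= 2 (floor y + ceil y) + 1, so the three entries equal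
   to 2 contribute at least the term for x plus floor y + ceil y - 1 >= 0,
   and each of the n >= 2 remaining terms is at least 1. *)

Lemma int_fun_attains_min (T : Type) (P : T -> Prop) (g : T -> int) (lb : int) :
  (forall x, P x -> lb <= g x) -> (exists x, P x) ->
  exists2 x0, P x0 & forall y, P y -> g x0 <= g y.
Proof.
move=> g_ge [x Px].
suff min_below n : forall x, P x -> g x - lb <= n%:Z ->
    exists2 x0, P x0 & forall y, P y -> g x0 <= g y.
  by apply: (min_below `|g x - lb|%N x Px); have := g_ge x Px; lia.
clear x Px; elim: n => [|n IHn] x Px gx_le.
  by exists x => // y Py; have := g_ge y Py; lia.
have [[y [Py gy_lt]]|no_smaller] := classic (exists y, P y /\ g y < g x).
  by apply: (IHn y Py); lia.
exists x => // y Py; rewrite leNgt; apply/negP => gy_lt.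
by apply: no_smaller; exists y.
Qed.

Section FloorCeil.
Context {R : archiRealDomainType}.
Implicit Types y : R.

Lemma floorDceil_ge y : 2 * y - 1 <= (Num.floor y + Num.ceil y)%:~R.
Proof. by have := floorD1_gt y; have := ceil_ge y; rewrite !intrD; lra. Qed.

Lemma floorDceil_le y : (Num.floor y + Num.ceil y)%:~R <= 2 * y + 1.
Proof. by have := floor_le y; have := ceilB1_lt y; rewrite intrB intrD; lra. Qed.

Lemma floorDceil_gt0 y : 0 < y -> 0 < Num.floor y + Num.ceil y.
Proof. by move=> y_gt0; rewrite ltr_wpDl ?floor_ge0 ?ltW ?ceil_gt0. Qed.

Lemma floorM2_le y : Num.floor (y *+ 2) <= Num.floor y *+ 2 + 1.
Proof.
rewrite -ltzD1 -addrA floor_lt_int -mulr2n -mulrnDl rmorphMn ltr_pMn2r //.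
exact: floorD1_gt.
Qed.

Lemma ceilM2_le y : Num.ceil (y *+ 2) <= Num.ceil y *+ 2.
Proof. by rewrite ceil_le_int rmorphMn ler_pMn2r // ceil_ge. Qed.

Lemma floorDceilM2_le y :
  Num.floor (y *+ 2) + Num.ceil (y *+ 2) <= (Num.floor y + Num.ceil y) *+ 2 + 1.
Proof. by have := floorM2_le y; have := ceilM2_le y; rewrite !mulr2n; lia. Qed.

End FloorCeil.

Section SumFloorCeil.
Context {R : archiRealFieldType}.
Implicit Types (a : seq nat) (x : R).

Lemma sum_floorDceil_ge a x :
  2 * x * \sum_(k <- a) k%:R^-1 - (size a)%:R <=
  (\sum_(k <- a) (Num.floor (x / k%:R) + Num.ceil (x / k%:R)))%:~R.
Proof.
elim: a => [|k a IHa]; first by rewrite !big_nil mulr0 subr0.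
rewrite !big_cons intrD mulrDr /= -addn1 natrD.
by have := floorDceil_ge (x / k%:R); rewrite mulrA; lra.
Qed.

Lemma sum_floorDceil_ge_size a x : 0 < x -> all (fun k => (0 < k)%N) a ->
  (size a)%:Z <= \sum_(k <- a) (Num.floor (x / k%:R) + Num.ceil (x / k%:R)).
Proof.
move=> x_gt0; elim: a => [|k a IHa] /=; first by rewrite big_nil.
case/andP=> k_gt0 /IHa sum_ge; rewrite big_cons -addn1 PoszD addrC.
by rewrite lerD // -gtz0_ge1 floorDceil_gt0 // divr_gt0 ?ltr0n.
Qed.

End SumFloorCeil.

Section MinimumOfFa.
Variable R : realType.
Implicit Types (a b : seq nat) (x : R).

Lemma f_a_ge a x : 0 <= x -> 1 <= \sum_(k <- a) (k%:R : R)^-1 ->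
  - (size a)%:Z - 1 <= f_a a x.
Proof.
move=> x_ge0 inv_sum_ge1; rewrite -(ler_int R) /f_a !intrB intrN.
have := sum_floorDceil_ge a x; have := floorDceil_le x.
have : 2 * x <= 2 * x * \sum_(k <- a) (k%:R : R)^-1.
  by rewrite ler_peMr // mulr_ge0.
by lra.
Qed.

Lemma f_a_attains_min a :
  1 <= \sum_(k <- a) (k%:R : R)^-1 ->
  exists2 x0 : R, 0 < x0 & forall x : R, 0 < x -> f_a a x0 <= f_a a x.
Proof.
move=> inv_sum_ge1.
have f_a_bounded x : 0 < x -> - (size a)%:Z - 1 <= f_a a x.
  by move/ltW=> x_ge0; exact: f_a_ge.
by apply: int_fun_attains_min f_a_bounded _; exists 1.
Qed.

Lemma f_a_222_ge2 b x :
  (2 <= size b)%N -> all (fun k => (0 < k)%N) b -> 0 < x ->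
  2 <= f_a [:: 2%N, 2%N, 2%N & b] x.
Proof.
move=> size_b b_gt0 x_gt0; rewrite /f_a !big_cons.
have := sum_floorDceil_ge_size x_gt0 b_gt0; set s := \sum_(_ <- b) _.
set y := x / 2%:R.
have x_eq : x = y *+ 2 by rewrite /y -mulr_natr divfK ?pnatr_eq0.
have := floorDceil_gt0 (divr_gt0 x_gt0 (ltr0n R 2)); rewrite -/y.
have := floorDceilM2_le y; rewrite -x_eq.
(* the lemmas reach the floor of R through another instance path than f_a;
   generalizing identifies the two, which lia would treat as distinct atoms *)
move: (Num.floor y + Num.ceil y) (Num.floor x + Num.ceil x) => T X.
by rewrite mulr2n; lia.
Qed.

End MinimumOfFa.

Theorem lemma5p6 (R : realType) :
  (* f_a attains a minimum on R_+ = (0, +oo) *)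
  (forall a : seq nat,
     all (fun k => (0 < k)%N) a ->
     1 <= \sum_(k <- a) (k%:R : R)^-1 ->
     exists2 x0 : R, 0 < x0 & forall x : R, 0 < x -> f_a a x0 <= f_a a x) /\
  (* for a = (2,2,2,a_1,...,a_n), n >= 2, the minimum m(a) is >= 2 *)
  (forall b : seq nat,
     (2 <= size b)%N ->
     all (fun k => (0 < k)%N) b ->
     forall x : R, 0 < x -> 2 <= f_a [:: 2%N, 2%N, 2%N & b] x).
Proof.
split; first by move=> a _; exact: f_a_attains_min.
by move=> b size_b b_gt0 x; exact: f_a_222_ge2.
Qed.
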